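(* Consider a stochastic $K$-armed bandit whose rewards lie in $[-R_{\max},R_{\max}]$, with mean reward vector $\mathbf r$, and run LB-SGB (defined in the context) with barrier parameter $\eta>0$ and learning rate $\alpha\in\Big(0,\frac{1}{6(\sqrt2R_{\max}+\frac{2}{\eta}K)}\Big)$. Then for all $t\ge1$, $$\Big|\Phi_\eta(\boldsymbol\theta_{t+1})-\Phi_\eta(\boldsymbol\theta_t)-\langle\nabla\Phi_\eta(\boldsymbol\theta_t),\boldsymbol\theta_{t+1}-\boldsymbol\theta_t\rangle\Big|\le\Big(\frac{3\|\nabla\Phi_\eta(\boldsymbol\theta_t)\|_2}{2-6\alpha(\sqrt2R_{\max}+\frac2\eta K)}+\frac{15K}{\eta}\Big)\|\boldsymbol\theta_{t+1}-\boldsymbol\theta_t\|_2^2.$$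
   Context: Softmax policy $\pi_{\boldsymbol\theta}(a)=e^{\theta(a)}/\sum_be^{\theta(b)}$; $\Phi_\eta(\boldsymbol\theta)=\pi_{\boldsymbol\theta}^\top\mathbf r+\frac1\eta\sum_a\log\pi_{\boldsymbol\theta}(a)$. LB-SGB: start from $\boldsymbol\theta=\mathbf 0$; at round $t$ sample $a_t\sim\pi_{\boldsymbol\theta_t}$, observe $R_t(a_t)$, set $\hat r_t(a)=\mathbb I\{a_t=a\}R_t(a_t)/\pi_{\boldsymbol\theta_t}(a)$ and update $\boldsymbol\theta_{t+1}=\boldsymbol\theta_t+\alpha\big[(\mathrm{diag}(\pi_{\boldsymbol\theta_t})-\pi_{\boldsymbol\theta_t}\pi_{\boldsymbol\theta_t}^\top)\hat{\mathbf r}_t+\frac1\eta(\mathbf 1-K\pi_{\boldsymbol\theta_t})\big]$. *)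

From HB Require Import structures.
From mathcomp Require Import all_boot all_order all_algebra.
From mathcomp Require Import all_classical all_reals all_analysis.
Set Implicit Arguments. Unset Strict Implicit. Unset Printing Implicit Defensive.
Import Order.TTheory GRing.Theory Num.Theory.
Import numFieldNormedType.Exports.
Local Open Scope ring_scope.

Section LBSGB.
Variables (R : realType) (K : nat).

Definition softmax (th : 'rV[R]_K) : 'rV[R]_K :=
  \row_i (expR (th ord0 i) / \sum_j expR (th ord0 j)).

Definition Phi (eta : R) (r : 'rV[R]_K) (th : 'rV[R]_K) : R :=
  \sum_i softmax th ord0 i * r ord0 i + eta^-1 * \sum_i ln (softmax th ord0 i).

Definition grad (f : 'rV[R]_K -> R) (th : 'rV[R]_K) : 'rV[R]_K :=
  \row_i ('D_(delta_mx ord0 i) f th).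

Definition dotv (u v : 'rV[R]_K) : R := \sum_i u ord0 i * v ord0 i.
Definition l2norm (u : 'rV[R]_K) : R := Num.sqrt (\sum_i u ord0 i ^+ 2).

Definition lbsgb_step (eta alpha : R) (th : 'rV[R]_K) (a_t : 'I_K) (Rt : R)
  : 'rV[R]_K :=
  let p := softmax th in
  let rhat := \row_a ((a == a_t)%:R * Rt / p ord0 a) in
  (* (diag(pi) - pi pi^T) rhat *)
  let g := \row_a (p ord0 a * rhat ord0 a
                   - p ord0 a * \sum_b p ord0 b * rhat ord0 b) in
  th + alpha *: (g + eta^-1 *: \row_a (1 - K%:R * p ord0 a)).

(* theta_t for t >= 1 : theta_1 = 0, theta_{t+1} = step(theta_t, a_t, R_t(a_t)).
   Index 0 is unused (also set to 0). *)
Fixpoint lbsgb_theta (eta alpha : R) (act : nat -> 'I_K) (rew : nat -> R)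
  (t : nat) : 'rV[R]_K :=
  match t with
  | 0 => 0
  | t'.+1 => if t' is 0 then 0
             else lbsgb_step eta alpha (lbsgb_theta eta alpha act rew t')
                    (act t') (rew t')
  end.

End LBSGB.

(* With p = pi_theta, Z = sum_a p(a) e^(d a) and m = <p, d>, the policy after a
   step d is pi_(theta + d)(a) = p(a) e^(d a) / Z.  Hence the first-order Taylor
   remainder of Phi_eta splits exactly into a reward part
   (<g, e^d - 1 - d> + (1 - Z) <g, d>) / Z, with g the gradient of pi^T r, and a
   barrier part -(K / eta) (ln Z - m).  Every LB-SGB step has coordinates of size
   at most delta = alpha (Rmax + K / eta) <= 1/6, and for |x| <= delta the bounds
   |e^x - 1| <= |x| / (1 - delta) and 0 <= e^x - 1 - x <= x^2 / (2 (1 - delta)),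
   together with m <= ln Z (Jensen) and ln Z <= Z - 1, make both parts
   O(|d|^2).  Finally |g| <= |grad Phi_eta| + K / eta because the barrier
   gradient 1 - K pi has norm at most K. *)

From HB Require Import structures.
From mathcomp Require Import all_boot all_order all_algebra.
From mathcomp Require Import all_classical all_reals all_analysis.
From mathcomp Require Import ring lra.
Set Implicit Arguments.
Unset Strict Implicit.
Unset Printing Implicit Defensive.
Import Order.TTheory GRing.Theory Num.Theory.
Import numFieldNormedType.Exports.
Local Open Scope ring_scope.

Section ExpBounds.
Variable R : realType.
Implicit Types d x : R.

Lemma expR_le_invB x : x < 1 -> expR x <= (1 - x)^-1.
Proof.
move=> x_lt1; rewrite -[expR x]invrK -expRN lef_pV2 ?posrE ?expR_gt0 ?subr_gt0 //.
by have := expR_ge1Dx (- x); lra.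
Qed.

Lemma expR_sub1Dx_le d x : 0 <= d -> d < 1 -> `|x| <= d ->
  expR x - 1 - x <= x ^+ 2 / (2 * (1 - d)).
Proof.
move=> d_ge0 d_lt1 xd; have d1_gt0 : 0 < 1 - d by rewrite subr_gt0.
set c := (2 * (1 - d))^-1.
have c2 : c * 2 = (1 - d)^-1 by rewrite /c invfM mulrAC mulVf ?mul1r.
have d1_ge1 : 1 <= (1 - d)^-1 by rewrite invf_ge1 // gerBl.
pose f y := c * y ^+ 2 + 1 + y - expR y.
suff : 0 <= f x by rewrite /f mulrC -/c; lra.
have f_derive (y : R) : is_derive y 1 f (c * (2 * y) + 1 - expR y).
  apply: is_derive_eq.
  by rewrite -[y%:A]/(y * 1) mulr1 -[c *: _]/(c * _) addr0 -mulr2n mulr_natl.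
have f'E (y : R) : derive1 f y = c * (2 * y) + 1 - expR y by rewrite derive1E derive_val.
have f_cont : continuous f.
  by move=> y; apply/differentiable_continuous/derivable1_diffP.
have f0 : f 0 = 0 by rewrite /f expR0; lra.
(* f' >= 0 on [0, d] as e^y <= 1 / (1 - y) <= 1 + y / (1 - d), and f' <= 0 on
   [-d, 0] as e^y >= 1 + y. *)
rewrite -f0; have [x_ge0|x_lt0] := leP 0 x.
- apply: (@ger0_derive1_ndecr _ f 0 d) => //; last first.
  + by rewrite -(ger0_norm x_ge0).
  + exact: continuous_subspaceT.
  move=> y; rewrite in_itv /= => /andP[y_gt0 yd].
  have y1_gt0 : 0 < 1 - y by lra.
  have : (1 - y)^-1 <= (1 - d)^-1 by rewrite lef_pV2 ?posrE //; lra.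
  have : (1 - y)^-1 * (1 - y) = 1 by rewrite mulVf ?gt_eqF.
  have := expR_le_invB (lt_trans yd d_lt1).
  by rewrite f'E mulrA c2; nra.
- apply: (@ler0_derive1_nincr _ f (- d) 0) => //; last first.
  + exact: ltW.
  + by move: xd; rewrite ltr0_norm // lerNl.
  + exact: continuous_subspaceT.
  move=> y; rewrite in_itv /= => /andP[yd y_lt0].
  by have := expR_ge1Dx y; rewrite f'E mulrA c2; nra.
Qed.

Lemma expR_sub1_le d x : 0 <= d -> d < 1 -> `|x| <= d ->
  `|expR x - 1| <= `|x| / (1 - d).
Proof.
move=> d_ge0 d_lt1 xd; have d1_gt0 : 0 < 1 - d by rewrite subr_gt0.
have d1_ge1 : 1 <= (1 - d)^-1 by rewrite invf_ge1 // gerBl.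
have [x_ge0|x_lt0] := leP 0 x.
- move: xd; rewrite (ger0_norm x_ge0) => xd.
  have x1_gt0 : 0 < 1 - x by lra.
  have inv_le : (1 - x)^-1 <= (1 - d)^-1 by rewrite lef_pV2 ?posrE //; lra.
  have invK : (1 - x)^-1 * (1 - x) = 1 by rewrite mulVf ?gt_eqF.
  have : (1 - x)^-1 - 1 <= x / (1 - d) by nra.
  have := expR_le_invB (le_lt_trans xd d_lt1); have := expR_ge1Dx x.
  by move=> ? ? ?; rewrite ger0_norm; lra.
- have e_le1 : expR x <= 1 by rewrite expR_le1 ltW.
  rewrite (ltr0_norm x_lt0) ler0_norm ?subr_le0 //.
  by have := expR_ge1Dx x; nra.
Qed.

End ExpBounds.

Section EuclideanNorm.
Variables (R : realType) (n : nat).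
Implicit Types u v : 'rV[R]_n.

Lemma sumr_sqr_ge0 (f : 'I_n -> R) : 0 <= \sum_i f i ^+ 2.
Proof. by apply: sumr_ge0 => i _; exact: sqr_ge0. Qed.

Lemma l2norm_ge0 u : 0 <= l2norm u.
Proof. exact: sqrtr_ge0. Qed.

Lemma l2norm_sqr u : l2norm u ^+ 2 = \sum_i u ord0 i ^+ 2.
Proof. by rewrite sqr_sqrtr // sumr_sqr_ge0. Qed.

Lemma l2normZ c u : l2norm (c *: u) = `|c| * l2norm u.
Proof.
rewrite /l2norm -sqrtr_sqr -sqrtrM ?sqr_ge0 // mulr_sumr.
by congr Num.sqrt; apply: eq_bigr => i _; rewrite mxE exprMn.
Qed.

Lemma dotv_sqr_le u v : dotv u v ^+ 2 <= l2norm u ^+ 2 * l2norm v ^+ 2.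
Proof.
rewrite !l2norm_sqr /dotv.
set A := \sum_i u ord0 i ^+ 2; set B := \sum_i v ord0 i ^+ 2.
set S := \sum_i u ord0 i * v ord0 i.
have [A0|A_neq0] := eqVneq A 0.
  have u0 i : u ord0 i = 0.
    apply/eqP; rewrite -sqrf_eq0; apply/eqP.
    by move/psumr_eq0P: A0 => -> // j _; exact: sqr_ge0.
  by rewrite /S big1 ?expr0n ?A0 ?mul0r // => i _; rewrite u0 mul0r.
have A_gt0 : 0 < A by rewrite lt_def A_neq0 sumr_sqr_ge0.
set t := S / A; have tA : t * A = S by rewrite /t divfK.
have : 0 <= \sum_i (t * u ord0 i - v ord0 i) ^+ 2 by exact: sumr_sqr_ge0.
have -> : \sum_i (t * u ord0 i - v ord0 i) ^+ 2 = t ^+ 2 * A - 2 * t * S + B.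
  rewrite /A /B /S !mulr_sumr -sumrB -big_split /=.
  by apply: eq_bigr => i _; ring.
by nra.
Qed.

Lemma normr_dotv_le u v : `|dotv u v| <= l2norm u * l2norm v.
Proof.
rewrite -ler_sqr ?nnegrE ?mulr_ge0 ?l2norm_ge0 // real_normK ?num_real //.
by rewrite exprMn dotv_sqr_le.
Qed.

Lemma l2normB_le u v : l2norm (u - v) <= l2norm u + l2norm v.
Proof.
rewrite -ler_sqr ?nnegrE ?addr_ge0 ?l2norm_ge0 // sqrrD !l2norm_sqr.
have -> : \sum_i (u - v) ord0 i ^+ 2 =
    \sum_i u ord0 i ^+ 2 + \sum_i v ord0 i ^+ 2 - 2 * dotv u v.
  rewrite /dotv mulr_sumr -big_split -sumrB /=.
  by apply: eq_bigr => i _; rewrite !mxE; ring.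
have := normr_dotv_le u v; rewrite ler_norml => /andP[+ _].
by have := l2norm_ge0 u; have := l2norm_ge0 v; nra.
Qed.

Lemma normr_coord_le u i : `|u ord0 i| <= l2norm u.
Proof.
rewrite -ler_sqr ?nnegrE ?l2norm_ge0 // real_normK ?num_real // l2norm_sqr.
by rewrite (bigD1 i) //= lerDl; apply: sumr_ge0 => j _; exact: sqr_ge0.
Qed.

Lemma l2norm_le_sqr u v c : 0 <= c ->
  (forall i, `|u ord0 i| <= c * v ord0 i ^+ 2) -> l2norm u <= c * l2norm v ^+ 2.
Proof.
move=> c_ge0 uv.
rewrite -ler_sqr ?nnegrE ?mulr_ge0 ?sqr_ge0 ?l2norm_ge0 // exprMn !l2norm_sqr.
have sqr_sum_ge : \sum_i (v ord0 i ^+ 2) ^+ 2 <= (\sum_i v ord0 i ^+ 2) ^+ 2.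
  rewrite [X in _ <= X]expr2 mulr_suml; apply: ler_sum => i _.
  rewrite expr2 ler_wpM2l ?sqr_ge0 // (bigD1 i) //= lerDl.
  by apply: sumr_ge0 => j _; exact: sqr_ge0.
apply: le_trans (ler_wpM2l (sqr_ge0 c) sqr_sum_ge).
rewrite mulr_sumr; apply: ler_sum => i _.
have cv_ge0 : 0 <= c * v ord0 i ^+ 2 by rewrite mulr_ge0 ?sqr_ge0.
by rewrite -real_normK ?num_real // -exprMn ler_sqr ?nnegrE.
Qed.

End EuclideanNorm.

Lemma derive_along_line (R : numFieldType) (V W : normedModType R) (f : V -> W) x v :
  'D_v f x = 'D_1 (fun h : R => f (h *: v + x)) 0.
Proof.
rewrite /derive /=; do 2 f_equal; apply/funext => h /=.
by rewrite addr0 scale0r add0r [_%:A]mulr1.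
Qed.

Lemma is_derive_sum_along_coord (R : realType) (n : nat) (i : 'I_n)
    (a : 'I_n -> R) (f : 'I_n -> R -> R) (df : 'I_n -> R) :
  (forall j, is_derive (a j) 1 (f j) (df j)) ->
  is_derive (0 : R) 1 (fun h => \sum_j f j (h * (j == i)%:R + a j)) (df i).
Proof.
move=> fd; set e := fun j : 'I_n => (j == i)%:R : R.
have dj j : is_derive (0 : R) 1 (fun h => f j (h * e j + a j)) (df j * e j).
  have fd0 : is_derive (0 * e j + a j) 1 (f j) (df j) by rewrite mul0r add0r.
  apply: is_derive1_comp.
  apply: is_derive_eq (is_deriveD (is_deriveM (is_derive_id _ _) (is_derive_cst _ _ _))
    (is_derive_cst _ _ _)) _.
  by rewrite /= scaler0 add0r addr0 [_%:A]mulr1.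
have := is_derive_sum dj; rewrite fct_sumE (bigD1 i) //= big1 ?addr0 => [|j /negbTE ji].
  by rewrite /e eqxx mulr1.
by rewrite /e ji mulr0.
Qed.

Section Softmax.
Variables (R : realType) (K : nat).
Hypothesis K_gt0 : (0 < K)%N.
Implicit Types (th r : 'rV[R]_K) (eta : R).

Lemma sum_expR_gt0 (a : 'I_K -> R) : 0 < \sum_j expR (a j).
Proof.
rewrite (bigD1 (Ordinal K_gt0)) //= ltr_pwDl ?expR_gt0 //.
by apply: sumr_ge0 => j _; exact: expR_ge0.
Qed.

Lemma softmax_gt0 th i : 0 < softmax th ord0 i.
Proof. by rewrite mxE divr_gt0 ?expR_gt0 ?sum_expR_gt0. Qed.

Lemma sum_softmax th : \sum_i softmax th ord0 i = 1.
Proof.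
under eq_bigr do rewrite mxE.
by rewrite -mulr_suml mulfV // gt_eqF // sum_expR_gt0.
Qed.

Lemma dotv_softmaxE th r : dotv (softmax th) r =
  (\sum_j expR (th ord0 j) * r ord0 j) / \sum_j expR (th ord0 j).
Proof. by rewrite /dotv mulr_suml; apply: eq_bigr => j _; rewrite mxE mulrAC. Qed.

Lemma PhiE eta r th : Phi eta r th = dotv (softmax th) r
  + eta^-1 * (\sum_j th ord0 j - K%:R * ln (\sum_j expR (th ord0 j))).
Proof.
congr (_ + _ * _); rewrite (eq_bigr (fun j => th ord0 j - ln (\sum_j expR (th ord0 j)))).
  by rewrite sumrB sumr_const card_ord mulr_natl.
by move=> j _; rewrite mxE ln_div ?posrE ?expR_gt0 ?sum_expR_gt0 // expRK.
Qed.

Definition reward_grad th r : 'rV[R]_K :=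
  \row_i (softmax th ord0 i * (r ord0 i - dotv (softmax th) r)).

Definition barrier_grad th : 'rV[R]_K := \row_i (1 - K%:R * softmax th ord0 i).

Lemma grad_PhiE eta r th :
  grad (Phi eta r) th = reward_grad th r + eta^-1 *: barrier_grad th.
Proof.
apply/rowP => i; rewrite !mxE derive_along_line.
pose line j h := h * (j == i)%:R + th ord0 j.
pose S h := \sum_j expR (line j h).
pose N h := \sum_j expR (line j h) * r ord0 j.
pose T h := \sum_j line j h.
have -> : (fun h => Phi eta r (h *: delta_mx ord0 i + th)) =
    (fun h => N h / S h + eta^-1 * (T h - K%:R * ln (S h))).
  apply/funext => h; rewrite PhiE dotv_softmaxE.
  have coordE j : (h *: delta_mx ord0 i + th) ord0 j = line j h.
    by rewrite !mxE eqxx.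
  by congr (_ / _ + _ * (_ - _ * ln _)); apply: eq_bigr => j _; rewrite coordE.
have S0E : S 0 = \sum_j expR (th ord0 j).
  by apply: eq_bigr => j _; rewrite /line mul0r add0r.
have N0E : N 0 = \sum_j expR (th ord0 j) * r ord0 j.
  by apply: eq_bigr => j _; rewrite /line mul0r add0r.
have S0_gt0 : 0 < S 0 by rewrite S0E sum_expR_gt0.
have dS : is_derive (0 : R) 1 S (expR (th ord0 i)).
  exact: (is_derive_sum_along_coord (f := fun=> expR) i) (fun j => is_derive_expR _).
have dN : is_derive (0 : R) 1 N (expR (th ord0 i) * r ord0 i).
  apply: (is_derive_sum_along_coord (f := fun j x => expR x * r ord0 j)
    (df := fun j => expR (th ord0 j) * r ord0 j) i) => j.
  have dEr : is_derive (th ord0 j) 1 (fun x => expR x * r ord0 j) _ :=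
    is_deriveM (is_derive_expR _) (is_derive_cst (r ord0 j) (th ord0 j) 1).
  by apply: is_derive_eq dEr _; rewrite /= scaler0 add0r mulrC.
have dT : is_derive (0 : R) 1 T 1.
  exact: (is_derive_sum_along_coord (f := fun=> id) i) (fun j => is_derive_id _ _).
have dPhi := is_deriveD (is_deriveM dN (is_deriveV (lt0r_neq0 S0_gt0) dS))
  (is_deriveM (is_derive_cst (eta^-1 : R) (0 : R) 1)
     (is_deriveB dT (is_deriveM (is_derive_cst (K%:R : R) (0 : R) 1)
        (is_derive1_comp (is_derive1_ln S0_gt0) dS)))).
have scaleE (x y : R) : x *: y = x * y by [].
rewrite (derive_val (is_derive := dPhi)) /= dotv_softmaxE -S0E -N0E.
rewrite !scaler0 !addr0 !scaleE; set ie := eta^-1.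
by field; exact: lt0r_neq0.
Qed.

End Softmax.

Section MeanExp.
Variables (R : realType) (n : nat).

Definition mean_expR (p d : 'rV[R]_n) : R := \sum_i p ord0 i * expR (d ord0 i).

Definition expR_excess (d : 'rV[R]_n) : 'rV[R]_n := \row_i (expR (d ord0 i) - 1 - d ord0 i).

Variables (p d : 'rV[R]_n) (delta : R).
Hypotheses (p_ge0 : forall i, 0 <= p ord0 i) (sum_p : \sum_i p ord0 i = 1).
Hypotheses (delta_ge0 : 0 <= delta) (delta_lt1 : delta < 1).
Hypothesis d_le : forall i, `|d ord0 i| <= delta.

Lemma l2norm_expR_excess_le :
  l2norm (expR_excess d) <= l2norm d ^+ 2 / (2 * (1 - delta)).
Proof.
rewrite mulrC; apply: l2norm_le_sqr => [|i].
  by rewrite invr_ge0 mulr_ge0 // subr_ge0 ltW.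
rewrite mxE ger0_norm; last by have := expR_ge1Dx (d ord0 i); lra.
by rewrite mulrC; exact: expR_sub1Dx_le delta_ge0 delta_lt1 (d_le i).
Qed.

Lemma prob_coord_le1 i : p ord0 i <= 1.
Proof.
by rewrite -sum_p (bigD1 i) //= lerDl; apply: sumr_ge0 => j _; exact: p_ge0.
Qed.

Lemma mean_expR_ge : 1 - delta <= mean_expR p d.
Proof.
rewrite -[1 - delta]mul1r -[in X in X * _]sum_p mulr_suml; apply: ler_sum => i _.
have := d_le i; rewrite ler_norml => /andP[d_ge _].
by rewrite ler_wpM2l //; have := expR_ge1Dx (d ord0 i); lra.
Qed.

Lemma mean_expR_gt0 : 0 < mean_expR p d.
Proof. by apply: lt_le_trans mean_expR_ge; rewrite subr_gt0. Qed.

Lemma normr_1B_mean_expR : `|1 - mean_expR p d| <= l2norm d / (1 - delta).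
Proof.
have -> : 1 - mean_expR p d = \sum_i p ord0 i * (1 - expR (d ord0 i)).
  by rewrite -[in LHS]sum_p /mean_expR -sumrB; apply: eq_bigr => i _; ring.
rewrite -[_ / _]mul1r -[in X in X * _]sum_p mulr_suml.
apply: le_trans; first exact: ler_norm_sum.
apply: ler_sum => i _.
rewrite normrM (ger0_norm (p_ge0 i)) ler_wpM2l // distrC.
apply: le_trans (expR_sub1_le delta_ge0 delta_lt1 (d_le i)) _.
by apply: ler_wpM2r; [rewrite invr_ge0 subr_ge0 ltW | exact: normr_coord_le].
Qed.

Lemma dotv_le_ln_mean_expR : dotv p d <= ln (mean_expR p d).
Proof.
rewrite -ler_expR lnK ?posrE ?mean_expR_gt0 //; set m := dotv p d.
(* Tangent line of exp at m: e^(d i) >= e^m (1 + (d i - m)). *)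
have sum_tangent : \sum_i p ord0 i * (1 + (d ord0 i - m)) = 1.
  have -> : \sum_i p ord0 i * (1 + (d ord0 i - m)) =
      (1 - m) * \sum_i p ord0 i + \sum_i p ord0 i * d ord0 i.
    by rewrite mulr_sumr -big_split; apply: eq_bigr => i _ /=; ring.
  by rewrite sum_p /m /dotv; ring.
rewrite -[expR m]mulr1 -sum_tangent mulr_sumr; apply: ler_sum => i _.
have -> : expR (d ord0 i) = expR m * expR (d ord0 i - m) by rewrite -expRD addrC subrK.
by rewrite mulrCA ler_wpM2l // ler_wpM2l ?expR_ge0 // expR_ge1Dx.
Qed.

Lemma ln_mean_expR_le :
  ln (mean_expR p d) - dotv p d <= l2norm d ^+ 2 / (2 * (1 - delta)).
Proof.
set Z := mean_expR p d.
have ln_le : ln Z <= Z - 1.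
  have Z_gt0 : 0 < Z := mean_expR_gt0.
  by have := @le_ln1Dx R (Z - 1); rewrite [1 + _]addrC subrK; apply; lra.
apply: le_trans (lerB ln_le (lexx (dotv p d))) _.
have -> : Z - 1 - dotv p d = \sum_i p ord0 i * (expR (d ord0 i) - 1 - d ord0 i).
  by rewrite -[in LHS]sum_p /Z /mean_expR /dotv -!sumrB; apply: eq_bigr => i _; ring.
rewrite l2norm_sqr mulr_suml; apply: ler_sum => i _.
have expR_excess_ge0 : 0 <= expR (d ord0 i) - 1 - d ord0 i.
  by have := expR_ge1Dx (d ord0 i); lra.
apply: le_trans (ler_piMl expR_excess_ge0 (prob_coord_le1 i)) _.
exact: expR_sub1Dx_le delta_ge0 delta_lt1 (d_le i).
Qed.

Lemma normr_ln_mean_expR_le :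
  `|ln (mean_expR p d) - dotv p d| <= l2norm d ^+ 2 / (2 * (1 - delta)).
Proof. by rewrite ger0_norm ?subr_ge0 ?dotv_le_ln_mean_expR ?ln_mean_expR_le. Qed.

End MeanExp.

Lemma remainder_coef_le (R : realFieldType) (delta A G kap D : R) :
  0 <= delta -> delta <= 6^-1 -> 0 <= G -> 0 <= kap -> A <= G + kap ->
  (A * (D ^+ 2 / (2 * (1 - delta))) + D / (1 - delta) * (A * D)) / (1 - delta)
    + kap * (D ^+ 2 / (2 * (1 - delta)))
  <= (3 * G / (2 - 6 * delta) + 15 * kap) * D ^+ 2.
Proof.
(* Uses (1 - delta)^2 >= 1 - 3 delta and (1 - delta)^-1 <= 6/5; 15 is far from tight. *)
move=> delta_ge0 delta_le G_ge0 kap_ge0 AGk.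
have d1_neq0 : 1 - delta != 0 by rewrite subr_eq0 eq_sym; apply/eqP; lra.
have -> : (A * (D ^+ 2 / (2 * (1 - delta))) + D / (1 - delta) * (A * D)) / (1 - delta)
    + kap * (D ^+ 2 / (2 * (1 - delta)))
    = (3 / 2 * (1 - delta)^-2 * A + kap * (1 - delta)^-1 / 2) * D ^+ 2.
  by field.
apply: ler_wpM2r; first exact: sqr_ge0.
have d1_gt0 : 0 < 1 - delta by lra.
have d6_ge1 : 1 <= 2 - 6 * delta by lra.
set q := (1 - delta)^-1; set w := (2 - 6 * delta)^-1.
have q_le : q <= 6 / 5.
  have : q * (1 - delta) = 1 by rewrite mulVf ?gt_eqF.
  have : 0 < q by rewrite invr_gt0.
  by nra.
have qq_le : (1 - delta)^-2 <= 2 * w.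
  have -> : 2 * w = (1 - 3 * delta)^-1.
    by rewrite /w; field; apply/andP; split; apply/eqP; lra.
  by rewrite lef_pV2 ?posrE ?exprn_gt0 //; nra.
have w_le1 : w <= 1 by rewrite invf_le1 //; lra.
set Q := (1 - delta)^-2.
have Q_ge0 : 0 <= Q by rewrite invr_ge0 exprn_ge0 // ltW.
have QA : Q * A <= 2 * w * (G + kap).
  by apply: le_trans (ler_wpM2l Q_ge0 AGk) _; apply: ler_wpM2r => //; lra.
have w_ge0 : 0 <= w by rewrite invr_ge0; lra.
have : w * kap <= kap by rewrite ler_piMl.
have : kap * q <= kap * (6 / 5) by rewrite ler_wpM2l.
rewrite -[3 * G / _]mulrA -/w.
by nra.
Qed.

Section PhiRemainder.
Variables (R : realType) (K : nat).
Hypothesis K_gt0 : (0 < K)%N.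
Implicit Types (th r d : 'rV[R]_K) (eta : R).

Lemma softmax_le1 th i : softmax th ord0 i <= 1.
Proof.
exact: prob_coord_le1 (fun j => ltW (softmax_gt0 K_gt0 th j)) (sum_softmax K_gt0 th) i.
Qed.

Lemma l2norm_barrier_grad_le th : l2norm (barrier_grad th) <= K%:R.
Proof.
set p := softmax th.
rewrite -ler_sqr ?nnegrE ?l2norm_ge0 ?ler0n // l2norm_sqr.
apply: (@le_trans _ _ (\sum_j (1 - 2 * K%:R * p ord0 j + K%:R ^+ 2 * p ord0 j))).
  apply: ler_sum => j _; rewrite mxE.
  have := softmax_le1 th j; have := softmax_gt0 K_gt0 th j.
  have : 0 <= K%:R :> R by rewrite ler0n.
  by rewrite -/p; nra.
rewrite big_split sumrB /= sumr_const card_ord -!mulr_sumr sum_softmax // !mulr1.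
have : 1 <= K%:R :> R by rewrite ler1n.
by nra.
Qed.

Lemma sum_expR_add th d :
  \sum_j expR ((th + d) ord0 j) = (\sum_j expR (th ord0 j)) * mean_expR (softmax th) d.
Proof.
rewrite /mean_expR mulr_sumr; apply: eq_bigr => j _.
rewrite !mxE expRD mulrA mulrCA mulfV ?mulr1 //.
by rewrite gt_eqF ?sum_expR_gt0.
Qed.

Lemma dotv_softmax_add th d r : dotv (softmax (th + d)) r =
  dotv (softmax th) (\row_j (expR (d ord0 j) * r ord0 j)) / mean_expR (softmax th) d.
Proof.
rewrite dotv_softmaxE sum_expR_add invfM mulrA; congr (_ / _).
rewrite /dotv mulr_suml; apply: eq_bigr => j _.
by rewrite !mxE expRD; ring.
Qed.

Lemma sum_reward_grad th r : \sum_j reward_grad th r ord0 j = 0.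
Proof.
have -> : \sum_j reward_grad th r ord0 j =
    dotv (softmax th) r - dotv (softmax th) r * \sum_j softmax th ord0 j.
  by rewrite {1}/dotv mulr_sumr -sumrB; apply: eq_bigr => j _; rewrite !mxE; ring.
by rewrite sum_softmax // mulr1 subrr.
Qed.

Lemma Phi_remainderE eta r th d :
  let p := softmax th in let Z := mean_expR p d in
  Phi eta r (th + d) - Phi eta r th - dotv (grad (Phi eta r) th) d =
  (dotv (reward_grad th r) (expR_excess d) + (1 - Z) * dotv (reward_grad th r) d) / Z
  - K%:R / eta * (ln Z - dotv p d).
Proof.
move=> p Z; set a := reward_grad th r; set S := \sum_j expR (th ord0 j).
have S_gt0 : 0 < S by exact: sum_expR_gt0.
have Z_gt0 : 0 < Z.
  have := sum_expR_gt0 K_gt0 (fun j => (th + d) ord0 j).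
  by rewrite sum_expR_add -/S -/p -/Z pmulr_rgt0.
have dotv_grad : dotv (a + eta^-1 *: barrier_grad th) d =
    dotv a d + eta^-1 * (\sum_j d ord0 j - K%:R * dotv p d).
  rewrite /dotv [K%:R * _]mulr_sumr -sumrB mulr_sumr -big_split.
  by apply: eq_bigr => j _ /=; rewrite !mxE; ring.
have sum_add : \sum_j (th + d) ord0 j = \sum_j th ord0 j + \sum_j d ord0 j.
  by rewrite -big_split; apply: eq_bigr => j _; rewrite mxE.
have dotv_excess : dotv a (expR_excess d) =
    dotv p (\row_j (expR (d ord0 j) * r ord0 j)) - dotv p r * Z - dotv a d.
  set rho := dotv p r.
  rewrite -[RHS]subr0 -(sum_reward_grad th r) -/a /dotv /Z /mean_expR mulr_sumr -!sumrB.
  by apply: eq_bigr => j _ /=; rewrite !mxE -/rho; ring.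
rewrite !(PhiE K_gt0) (sum_expR_add th d) lnM ?posrE // (dotv_softmax_add th d r).
rewrite (grad_PhiE K_gt0) -/a dotv_grad sum_add dotv_excess -/p -/Z -/S.
rewrite -[K%:R / eta]/(K%:R * eta^-1); set ie := eta^-1.
by field; rewrite gt_eqF.
Qed.

Lemma l2norm_reward_grad_le eta r th : 0 < eta ->
  l2norm (reward_grad th r) <= l2norm (grad (Phi eta r) th) + K%:R / eta.
Proof.
move=> eta_gt0.
have -> : reward_grad th r = grad (Phi eta r) th - eta^-1 *: barrier_grad th.
  by rewrite (grad_PhiE K_gt0) addrK.
have ieta_ge0 : 0 <= eta^-1 by rewrite invr_ge0 ltW.
apply: le_trans (l2normB_le _ _) _; rewrite lerD2l l2normZ ger0_norm // mulrC.
exact: ler_wpM2r (l2norm_barrier_grad_le th).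
Qed.

Lemma Phi_remainder_le eta r th d delta :
  0 < eta -> 0 <= delta -> delta <= 6^-1 -> (forall j, `|d ord0 j| <= delta) ->
  `|Phi eta r (th + d) - Phi eta r th - dotv (grad (Phi eta r) th) d|
    <= (3 * l2norm (grad (Phi eta r) th) / (2 - 6 * delta) + 15 * K%:R / eta)
       * l2norm d ^+ 2.
Proof.
move=> eta_gt0 delta_ge0 delta_le d_le; rewrite Phi_remainderE.
set p := softmax th; set Z := mean_expR p d; set a := reward_grad th r.
set D := l2norm d; set kap := K%:R / eta.
have delta_lt1 : delta < 1 by apply: le_lt_trans delta_le _; rewrite invf_lt1 ?ltr1n.
have p_ge0 j : 0 <= p ord0 j by exact/ltW/softmax_gt0.
have sum_p : \sum_j p ord0 j = 1 by exact: sum_softmax.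
have Z_gt0 : 0 < Z := mean_expR_gt0 p_ge0 sum_p delta_lt1 d_le.
have kap_ge0 : 0 <= kap by rewrite divr_ge0 ?ler0n ?ltW.
have A_ge0 : 0 <= l2norm a := l2norm_ge0 a.
apply: le_trans (ler_normB _ _) _.
rewrite -[15 * _ / eta]mulrA -/kap.
apply: le_trans _ (remainder_coef_le _ delta_ge0 delta_le (l2norm_ge0 _) kap_ge0
  (l2norm_reward_grad_le r th eta_gt0)); apply: lerD.
  rewrite normrM normfV (gtr0_norm Z_gt0).
  apply: ler_pM; [exact: normr_ge0 | by rewrite invr_ge0 ltW | |].
    apply: le_trans (ler_normD _ _) _; apply: lerD.
      apply: le_trans (normr_dotv_le _ _) _; apply: ler_wpM2l => //.
      exact: l2norm_expR_excess_le delta_ge0 delta_lt1 d_le.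
    rewrite normrM; apply: ler_pM => //; last exact: normr_dotv_le.
    exact: normr_1B_mean_expR p_ge0 sum_p delta_ge0 delta_lt1 d_le.
  by rewrite lef_pV2 ?posrE ?subr_gt0 // (mean_expR_ge p_ge0 sum_p d_le).
rewrite normrM (ger0_norm kap_ge0) ler_wpM2l //.
exact: normr_ln_mean_expR_le p_ge0 sum_p delta_ge0 delta_lt1 d_le.
Qed.

End PhiRemainder.

Lemma lbsgb_step_coord_le (R : realType) (K : nat) (K_gt0 : (0 < K)%N)
    (eta alpha Rmax Rt : R) (th : 'rV[R]_K) (a : 'I_K) :
  0 < eta -> 0 < alpha -> `|Rt| <= Rmax ->
  forall j, `|(lbsgb_step eta alpha th a Rt - th) ord0 j| <= alpha * (Rmax + K%:R / eta).
Proof.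
move=> eta_gt0 alpha_gt0 Rt_le j; rewrite /lbsgb_step /= addrC addKr.
move: (softmax th) (softmax_gt0 K_gt0 th) (softmax_le1 K_gt0 th) => p p_gt0 p_le1.
have pick b : p ord0 b * ((b == a)%:R * Rt / p ord0 b) = (b == a)%:R * Rt.
  by rewrite mulrC divfK ?(gt_eqF (p_gt0 b)).
rewrite !mxE pick; under eq_bigr do rewrite mxE pick.
rewrite (bigD1 a) //= big1 ?addr0 => [|b /negbTE ->]; last by rewrite mul0r.
rewrite eqxx mul1r normrM (gtr0_norm alpha_gt0); apply: ler_wpM2l; first exact: ltW.
apply: le_trans (ler_normD _ _) _; apply: lerD.
  rewrite -mulrBl normrM -[Rmax]mul1r ler_pM //.
  have := p_gt0 j; have := p_le1 j.
  by case: (j == a) => /= ? ?; rewrite ler_norml; apply/andP; split; lra.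
have ieta_ge0 : 0 <= eta^-1 by rewrite invr_ge0 ltW.
rewrite normrM (ger0_norm ieta_ge0) mulrC; apply: ler_wpM2r => //.
have : 1 <= K%:R :> R by rewrite ler1n.
have := p_gt0 j; have := p_le1 j.
by rewrite ler_norml => ? ? ?; apply/andP; split; nra.
Qed.

Lemma lbsgb_radius_le (R : realType) (K : nat) (Rmax eta alpha : R) :
  (0 < K)%N -> 0 <= Rmax -> 0 < eta -> 0 < alpha ->
  alpha < 1 / (6 * (Num.sqrt 2 * Rmax + 2 / eta * K%:R)) ->
  [/\ 0 <= alpha * (Rmax + K%:R / eta),
       alpha * (Rmax + K%:R / eta) <= alpha * (Num.sqrt 2 * Rmax + 2 / eta * K%:R)
     & alpha * (Num.sqrt 2 * Rmax + 2 / eta * K%:R) < 6^-1].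
Proof.
move=> K_gt0 Rmax_ge0 eta_gt0 alpha_gt0 alpha_lt.
set c := Num.sqrt 2 * Rmax + 2 / eta * K%:R.
have kap_gt0 : 0 < K%:R / eta by rewrite divr_gt0 ?ltr0n.
have sqrt2_ge1 : 1 <= Num.sqrt 2 :> R.
  by rewrite -[X in X <= _]sqrtr1 ler_sqrt // ler1n.
have : Rmax <= Num.sqrt 2 * Rmax by rewrite ler_peMl.
have : 0 <= Num.sqrt 2 * Rmax by rewrite mulr_ge0 ?sqrtr_ge0.
move=> sqrt2R_ge0 sqrt2R_ge; have c_gt0 : 0 < c by rewrite /c; lra.
split.
- by apply: mulr_ge0; [exact: ltW | lra].
- by apply: ler_wpM2l; [exact: ltW | rewrite /c; lra].
- by move: alpha_lt; rewrite invfM mul1r ltr_pdivlMr // mulrC -ltr_pdivlMr //; lra.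
Qed.

Theorem lemmaC2 (R : realType) (K : nat) (hK : (0 < K)%N)
  (Rmax eta alpha : R) (r : 'rV[R]_K)
  (act : nat -> 'I_K) (rew : nat -> R) :
  0 <= Rmax ->
  (forall a, `|r ord0 a| <= Rmax) ->
  (forall t, `|rew t| <= Rmax) ->
  0 < eta ->
  0 < alpha ->
  alpha < 1 / (6 * (Num.sqrt 2 * Rmax + 2 / eta * K%:R)) ->
  forall t : nat, (1 <= t)%N ->
    let th := lbsgb_theta eta alpha act rew in
    let d := th t.+1 - th t in
    `| Phi eta r (th t.+1) - Phi eta r (th t) - dotv (grad (Phi eta r) (th t)) d |
      <= (3 * l2norm (grad (Phi eta r) (th t))
            / (2 - 6 * alpha * (Num.sqrt 2 * Rmax + 2 / eta * K%:R))
          + 15 * K%:R / eta) * l2norm d ^+ 2.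
Proof.
move=> Rmax_ge0 _ rew_le eta_gt0 alpha_gt0 alpha_lt [//|t] _; cbv zeta.
set th := lbsgb_theta eta alpha act rew t.+1.
set step := lbsgb_step eta alpha th (act t.+1) (rew t.+1).
have -> : lbsgb_theta eta alpha act rew t.+2 = step by [].
set d := step - th.
have -> : step = th + d by rewrite addrC subrK.
have [delta_ge0 delta_le alpha_c_lt] := lbsgb_radius_le hK Rmax_ge0 eta_gt0 alpha_gt0 alpha_lt.
have step_le := lbsgb_step_coord_le hK th (act t.+1) eta_gt0 alpha_gt0 (rew_le t.+1).
apply: le_trans (Phi_remainder_le hK r th eta_gt0 delta_ge0 _ step_le) _; first by lra.
apply: ler_wpM2r; first exact: sqr_ge0.
rewrite lerD2r -!mulrA; apply: ler_wpM2l => //.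
apply: ler_wpM2l; first exact: l2norm_ge0.
rewrite lef_pV2 ?posrE; lra.
Qed.
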